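(* Let $k\in\mathbb{P}$, $b\geq 2$ an integer, and $M\in\mathbb{N}$. Suppose $X'=(x_1',\dots,x_k')$ and $X=(x_1,\dots,x_k)$ are the greedy presentations of integers $r_1,r_2\in\{0,1,\dots,M\}$ respectively. If $X'\preceq X$, then $w(r_1)\leq w(r_2)$.
   Context: $\mathbb{P}$ denotes the positive integers, $\mathbb{N}$ the nonnegative integers. Let $B_i=\frac{b^i-1}{b-1}$ for $1\le i\le k$. The greedy presentation of $N\in\mathbb{N}$ is the tuple $(x_1,\dots,x_k)\in\mathbb{N}^k$ with $\sum_i B_i x_i=N$ obtained by the greedy algorithm (take $x_k$ maximal, then $x_{k-1}$ maximal for the remainder, etc.); equivalently it satisfies $x_k=\lfloor (b-1)N/(b^k-1)\rfloor$, $x_i\in\{0,\dots,b\}$ for $1\le i\le k-1$, and if $2\le i\le k-1$ and $x_i=b$ then $x_1=\cdots=x_{i-1}=0$. The weight of $N$ is $w(N)=\sum_{i=1}^k b^i x_i$ where $(x_i)$ is its greedy presentation. The colexicographic order $\preceq$ on tuples: $(x_1',\dots,x_k')\preceq(x_1,\dots,x_k)$ iff either $x_i'=x_i$ for all $i$, or there is $j$ with $x_j'<x_j$ and $x_i'=x_i$ for all $i>j$. *)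

From mathcomp Require Import all_boot.
Set Implicit Arguments. Unset Strict Implicit. Unset Printing Implicit Defensive.

Definition Bnum (b i : nat) : nat := (b ^ i - 1) %/ (b - 1).

Fixpoint greedy_aux (b i N : nat) : seq nat :=
  (* returns [:: x_1; ...; x_i] for the remainder N *)
  match i with
  | 0 => [::]
  | i'.+1 => rcons (greedy_aux b i' (N %% Bnum b i)) (N %/ Bnum b i)
  end.

Definition greedy (b k N : nat) (i : nat) : nat :=
  nth 0 (greedy_aux b k N) i.-1.

Definition weight (b k N : nat) : nat :=
  \sum_(1 <= i < k.+1) b ^ i * greedy b k N i.

Definition colex_le (k : nat) (x' x : nat -> nat) : Prop :=
  (forall i, 1 <= i <= k -> x' i = x i) \/
  (exists j, [/\ 1 <= j <= k, x' j < x j &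
              forall i, j < i <= k -> x' i = x i]).

From mathcomp Require Import all_boot.
From mathcomp Require Import zify.

Set Implicit Arguments.
Unset Strict Implicit.
Unset Printing Implicit Defensive.

(* Peeling off the top level: the greedy presentation of N at level k+1 is
   (greedy presentation of N mod B_(k+1) at level k, N div B_(k+1)), and
   colex comparison first compares these top digits.  If they are equal we
   conclude by induction.  If the top digit of r1 is smaller, it suffices that
   every remainder below B_(k+1) = b B_k + 1 has weight at most b^(k+1): its
   top digit is at most b, and equals b only for the remainder b B_k, whose
   lower digits vanish. *)

Lemma Bnum_geom b i : 1 < b -> Bnum b i = \sum_(j < i) b ^ j.
Proof.
move=> b_gt1; rewrite /Bnum subn1 predn_exp -subn1 mulKn //; lia.
Qed.

Lemma Bnum_S b i : 1 < b -> Bnum b i.+1 = b * Bnum b i + 1.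
Proof.
move=> b_gt1; rewrite !Bnum_geom // big_ord_recl big_distrr addnC.
by congr (_ + _); apply: eq_bigr => j _; rewrite expnS.
Qed.

Lemma Bnum_gt0 b i : 1 < b -> 0 < Bnum b i.+1.
Proof. by move=> b_gt1; rewrite Bnum_S // addn1. Qed.

Lemma size_greedy_aux b i N : size (greedy_aux b i N) = i.
Proof. by elim: i N => [|i IH] N //=; rewrite size_rcons IH. Qed.

Lemma greedy_top b k N : greedy b k.+1 N k.+1 = N %/ Bnum b k.+1.
Proof. by rewrite /greedy /= nth_rcons size_greedy_aux ltnn eqxx. Qed.

Lemma greedy_low b k N i :
  0 < i <= k -> greedy b k.+1 N i = greedy b k (N %% Bnum b k.+1) i.
Proof.
by case: i => [|i] // /andP[_ lt_ik]; rewrite /greedy /= nth_rcons size_greedy_aux lt_ik.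
Qed.

Lemma weight_S b k N :
  weight b k.+1 N = weight b k (N %% Bnum b k.+1) + b ^ k.+1 * (N %/ Bnum b k.+1).
Proof.
rewrite /weight big_nat_recr //= greedy_top; congr (_ + _).
by apply: eq_big_nat => i lt_ik; rewrite greedy_low.
Qed.

Lemma weight0 b k : weight b k 0 = 0.
Proof.
elim: k => [|k IH]; first by rewrite /weight big_geq.
by rewrite weight_S mod0n div0n IH muln0.
Qed.

Lemma weight_le_of_lt_Bnum b k N :
  1 < b -> N < Bnum b k.+1 -> weight b k N <= b ^ k.+1.
Proof.
move=> b_gt1; elim: k N => [|k IH] N; first by rewrite /weight big_geq.
rewrite Bnum_S // weight_S => lt_N_bB.
have B_gt0 := Bnum_gt0 k b_gt1.
have := IH _ (ltn_pmod N B_gt0).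
have := divn_eq N (Bnum b k.+1).
set B := Bnum b k.+1; set q := N %/ B; set r := N %% B => N_eq le_wr.
have le_qb : q <= b by nia.
have [lt_qb | ge_qb] := ltnP q b.
  rewrite (expnS b k.+1); nia.
have [q_eq r_eq] : q = b /\ r = 0 by split; nia.
by rewrite r_eq q_eq weight0 add0n -expnSr.
Qed.

Lemma colex_le_S k x' x :
  colex_le k.+1 x' x ->
  x' k.+1 < x k.+1 \/ x' k.+1 = x k.+1 /\ colex_le k x' x.
Proof.
case=> [eq_x | [j [/andP[j_gt0 le_jSk] lt_j eq_above]]].
  right; split; first by apply: eq_x; rewrite ltnSn andbT.
  by left=> i /andP[i_gt0 le_ik]; apply: eq_x; rewrite i_gt0 leqW.
have [j_eq | ne_j] := eqVneq j k.+1; first by left; rewrite -j_eq.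
have le_jk : j <= k by rewrite leq_eqVlt (negPf ne_j) in le_jSk.
right; split; first by apply: eq_above; rewrite ltnS le_jk leqnn.
right; exists j; split; [by rewrite j_gt0 | by [] |].
by move=> i /andP[lt_ji le_ik]; apply: eq_above; rewrite lt_ji leqW.
Qed.

Lemma colex_le_eq_in k x' x y' y :
  (forall i, 0 < i <= k -> x' i = y' i) ->
  (forall i, 0 < i <= k -> x i = y i) ->
  colex_le k x' x -> colex_le k y' y.
Proof.
move=> eq_x' eq_x [eq_all | [j [le_j lt_j eq_above]]].
  by left=> i le_i; rewrite -eq_x' // -eq_x // eq_all.
right; exists j; split=> //; first by rewrite -eq_x' // -eq_x.
move=> i /andP[lt_ji le_ik].
have le_i : 0 < i <= k by rewrite le_ik (leq_ltn_trans _ lt_ji).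
by rewrite -eq_x' // -eq_x // eq_above // lt_ji.
Qed.

Lemma weight_colex_mono b k N1 N2 :
  1 < b -> colex_le k (greedy b k N1) (greedy b k N2) ->
  weight b k N1 <= weight b k N2.
Proof.
move=> b_gt1; elim: k N1 N2 => [|k IH] N1 N2; first by rewrite /weight !big_geq.
rewrite !weight_S => /colex_le_S; rewrite !greedy_top.
case=> [lt_q | [eq_q colex_low]].
  have le_w1 := weight_le_of_lt_Bnum b_gt1 (ltn_pmod N1 (Bnum_gt0 k b_gt1)).
  apply: leq_trans (leq_addl _ _); apply: leq_trans (leq_add le_w1 (leqnn _)) _.
  by rewrite addnC -mulnSr leq_mul2l lt_q orbT.
rewrite eq_q leq_add2r; apply: IH.
by apply: colex_le_eq_in colex_low => i /greedy_low.
Qed.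

Theorem lemma3p4 (k b M r1 r2 : nat) :
  0 < k -> 2 <= b -> r1 <= M -> r2 <= M ->
  colex_le k (greedy b k r1) (greedy b k r2) ->
  weight b k r1 <= weight b k r2.
Proof. by move=> _ b_gt1 _ _; apply: weight_colex_mono. Qed.
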